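(* Let $(S,A,P,R,\mu,\gamma)$ be a Markov decision process with discount factor $\gamma\in(0,1)$ and rewards bounded with $R_{\max}=\max_{s,a}R(s,a)$. Let $\pi_{\text{human}}$ and $\pi_{\text{AV}}$ be policies, let $\mathcal{T}:S\to\{0,1\}$ be a switch function, and define the mixed behavior policy $\pi_{\text{mix}}(\cdot\mid s)=\mathcal{T}(s)\,\pi_{\text{human}}(\cdot\mid s)+(1-\mathcal{T}(s))\,\pi_{\text{AV}}(\cdot\mid s)$. Assume $\mathbb{E}_{s\sim d_{\pi_{\text{mix}}}}\|\pi_{\text{human}}(\cdot\mid s)-\pi_{\text{AV}}(\cdot\mid s)\|_1>0$ and let $$\beta=\frac{\mathbb{E}_{s\sim d_{\pi_{\text{mix}}}}\left\|\mathcal{T}(s)\left[\pi_{\text{human}}(\cdot\mid s)-\pi_{\text{AV}}(\cdot\mid s)\right]\right\|_1}{\mathbb{E}_{s\sim d_{\pi_{\text{mix}}}}\|\pi_{\text{human}}(\cdot\mid s)-\pi_{\text{AV}}(\cdot\mid s)\|_1}.$$ Let $\pi^*_{\text{AV}}$ be an optimal policy, i.e. one maximizing $J$. Then $$\left|J(\pi^*_{\text{AV}})-J(\pi_{\text{AV}})\right|\le \frac{\beta R_{\max}}{(1-\gamma)^2}\,\mathbb{E}_{s\sim d_{\pi_{\text{mix}}}}\|\pi_{\text{human}}(\cdot\mid s)-\pi_{\text{AV}}(\cdot\mid s)\|_1+\left|J(\pi^*_{\text{AV}})-J(\pi_{\text{mix}})\right|.$$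
   Context: For a policy $\pi$, $J(\pi)=\mathbb{E}_{\tau\sim\pi}\left[\sum_{t=0}^\infty\gamma^t R(s_t,a_t)\right]$ where $s_0\sim\mu$, $a_t\sim\pi(\cdot\mid s_t)$, $s_{t+1}\sim P(\cdot\mid s_t,a_t)$. $d_\pi$ denotes the normalized discounted state visitation distribution $d_\pi(s)=(1-\gamma)\sum_{t\ge0}\gamma^t\Pr(s_t=s)$ under $\pi$. $\|\cdot\|_1$ is the $\ell_1$ norm on distributions over actions. *)

From HB Require Import structures.
From mathcomp Require Import all_boot all_order all_algebra.
From mathcomp Require Import all_classical all_reals all_analysis.
Set Implicit Arguments. Unset Strict Implicit. Unset Printing Implicit Defensive.
Import Order.TTheory GRing.Theory Num.Theory.
Local Open Scope ring_scope.

Section MDP.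
Variables (R : realType) (S A : finType).

Definition is_dist (T : finType) (p : T -> R) : Prop :=
  (forall x, 0 <= p x) /\ \sum_(x : T) p x = 1.

Definition is_policy (pi : S -> A -> R) : Prop := forall s, is_dist (pi s).

Definition is_kernel (P : S -> A -> S -> R) : Prop :=
  forall s a, is_dist (P s a).

Fixpoint state_prob (mu : S -> R) (P : S -> A -> S -> R) (pi : S -> A -> R)
  (t : nat) : S -> R :=
  match t with
  | 0 => mu
  | t'.+1 => fun s' =>
      \sum_(s : S) state_prob mu P pi t' s * \sum_(a : A) pi s a * P s a s'
  end.

(* J(pi) = E[ sum_t gamma^t R(s_t,a_t) ] = sum_t gamma^t E[R(s_t,a_t)] *)
Definition J (mu : S -> R) (P : S -> A -> S -> R) (Rw : S -> A -> R) (gamma : R)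
  (pi : S -> A -> R) : R :=
  limn (fun n => \sum_(0 <= t < n)
     (gamma ^+ t * \sum_(s : S) state_prob mu P pi t s * \sum_(a : A) pi s a * Rw s a)).

Definition visit (mu : S -> R) (P : S -> A -> S -> R) (gamma : R)
  (pi : S -> A -> R) (s : S) : R :=
  (1 - gamma) * limn (fun n => \sum_(0 <= t < n) (gamma ^+ t * state_prob mu P pi t s)).

Definition Eover (d : S -> R) (f : S -> R) : R := \sum_(s : S) d s * f s.

Definition l1 (f : A -> R) : R := \sum_(a : A) `|f a|.

Definition mix_policy (Tsw : S -> bool) (pih piav : S -> A -> R) : S -> A -> R :=
  fun s a => (Tsw s)%:R * pih s a + (1 - (Tsw s)%:R) * piav s a.

Definition Rmax (Rw : S -> A -> R) : R :=
  \big[Num.max/0]_(s : S) \big[Num.max/0]_(a : A) `|Rw s a|.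

End MDP.

(* The bound comes from the performance-difference argument.  Let V_k be the
   k-step value of pi_AV; every Q-value of pi_AV is bounded by
   R_max / (1 - gamma).  Playing one step of pi_mix and then following V_k
   therefore differs from V_(k+1) by at most
   R_max / (1 - gamma) * ||pi_mix(s) - pi_AV(s)||_1.  Telescoping these
   one-step gaps along the state distribution of pi_mix and letting the
   horizon grow gives
     J(pi_mix) - J(pi_AV) <= R_max / (1 - gamma)^2 * E_{d_mix} ||pi_mix - pi_AV||_1,
   and ||pi_mix(s) - pi_AV(s)||_1 = ||T(s) (pi_h(s) - pi_AV(s))||_1, so the
   right-hand side is beta R_max D / (1 - gamma)^2.  Since pi_star is optimal,
   J(pi_star) - J(pi_AV) >= 0 and the triangle inequality through J(pi_mix)
   concludes. *)
From HB Require Import structures.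
From mathcomp Require Import all_boot all_order all_algebra.
From mathcomp Require Import all_classical all_reals all_analysis.
From mathcomp Require Import ring lra.
Set Implicit Arguments. Unset Strict Implicit. Unset Printing Implicit Defensive.
Import Order.TTheory GRing.Theory Num.Theory.
Import numFieldNormedType.Exports.
Local Open Scope classical_set_scope.
Local Open Scope ring_scope.

Section Preliminaries.
Variable R : realType.

Lemma normr_expect_le (T : finType) (p q : T -> R) c :
  is_dist p -> (forall x, `|q x| <= c) -> `|\sum_(x : T) p x * q x| <= c.
Proof.
move=> [p_ge0 p_sum1] q_le; apply: le_trans (ler_norm_sum _ _ _) _.
apply: (@le_trans _ _ (\sum_(x : T) p x * c)).
  by apply: ler_sum => x _; rewrite normrM ger0_norm // ler_wpM2l.
by rewrite -mulr_suml p_sum1 mul1r.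
Qed.

Lemma Rmax_ge0 (S A : finType) (Rw : S -> A -> R) : 0 <= Rmax Rw.
Proof. exact: bigmax_ge_id. Qed.

Lemma normr_le_Rmax (S A : finType) (Rw : S -> A -> R) s a :
  `|Rw s a| <= Rmax Rw.
Proof.
apply: le_trans (le_bigmax _ _ s).
exact: (le_bigmax _ (fun a => `|Rw s a|) a).
Qed.

Lemma is_policy_mix (S A : finType) (Tsw : S -> bool) (pih piav : S -> A -> R) :
  is_policy pih -> is_policy piav -> is_policy (mix_policy Tsw pih piav).
Proof.
move=> hpih hpiav s.
have -> : mix_policy Tsw pih piav s = if Tsw s then pih s else piav s.
  by apply/funext => a; rewrite /mix_policy; case: (Tsw s) => /=; lra.
by case: (Tsw s); [exact: hpih | exact: hpiav].
Qed.

Lemma mix_policy_subr (S A : finType) (Tsw : S -> bool) (pih piav : S -> A -> R) s a :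
  mix_policy Tsw pih piav s a - piav s a = (Tsw s)%:R * (pih s a - piav s a).
Proof. rewrite /mix_policy; ring. Qed.

End Preliminaries.

Section DiscountedSeries.
Variables (R : realType) (gamma : R).
Hypotheses (gamma_ge0 : 0 <= gamma) (gamma_lt1 : gamma < 1).

Lemma discount_gap_neq0 : 1 - gamma != 0.
Proof. by rewrite subr_eq0 eq_sym lt_eqF. Qed.

Lemma cvgn_discounted_sum (a : nat -> R) c : (forall t, `|a t| <= c) ->
  cvgn (fun n => \sum_(0 <= t < n) gamma ^+ t * a t).
Proof.
move=> a_le; have c_ge0 : 0 <= c by apply: le_trans (a_le 0%N).
apply: (@normed_cvg R R^o (fun t => gamma ^+ t * a t)).
apply: (@series_le_cvg R (fun t => `|gamma ^+ t * a t|) (geometric c gamma)).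
- by [].
- by move=> n; rewrite /geometric /= mulr_ge0 // exprn_ge0.
- move=> n; rewrite /geometric /= normrM ger0_norm ?exprn_ge0 // mulrC.
  by rewrite ler_wpM2r ?exprn_ge0.
- by apply: is_cvg_geometric_series; rewrite ger0_norm.
Qed.

End DiscountedSeries.

Section MDP.
Variables (R : realType) (S A : finType).
Variables (P : S -> A -> S -> R) (Rw : S -> A -> R) (gamma : R).
Implicit Types (mu nu : S -> R) (pi : S -> A -> R).

Definition next_dist pi nu : S -> R :=
  fun s' => \sum_(s : S) nu s * \sum_(a : A) pi s a * P s a s'.

(* Partial sums chosen so that [J mu P Rw gamma pi] is convertible to
   [limn (Jn mu pi)] and [visit mu P gamma pi s] to
   [(1 - gamma) * limn (visit_n mu pi s)]. *)
Definition Jn mu pi n : R :=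
  \sum_(0 <= t < n) (gamma ^+ t *
    \sum_(s : S) state_prob mu P pi t s * \sum_(a : A) pi s a * Rw s a).

Definition visit_n mu pi s n : R :=
  \sum_(0 <= t < n) (gamma ^+ t * state_prob mu P pi t s).

Fixpoint Vn pi k : S -> R :=
  match k with
  | 0 => fun _ => 0
  | k'.+1 => fun s => \sum_(a : A) pi s a *
      (Rw s a + gamma * \sum_(s' : S) P s a s' * Vn pi k' s')
  end.

Lemma state_probSr mu pi t :
  state_prob mu P pi t.+1 = state_prob (next_dist pi mu) P pi t.
Proof.
elim: t => [//|t IH].
change (next_dist pi (state_prob mu P pi t.+1) =
        next_dist pi (state_prob (next_dist pi mu) P pi t)).
by rewrite IH.
Qed.

Lemma next_dist_expect pi nu (W : S -> R) :
  \sum_(s' : S) next_dist pi nu s' * W s' =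
  \sum_(s : S) nu s * \sum_(a : A) pi s a * \sum_(s' : S) P s a s' * W s'.
Proof.
under eq_bigr do rewrite mulr_suml.
rewrite exchange_big /=; apply: eq_bigr => s _.
under eq_bigr do rewrite -mulrA mulr_suml.
rewrite -mulr_sumr exchange_big; congr (_ * _); apply: eq_bigr => a _.
by rewrite mulr_sumr; apply: eq_bigr => s' _; rewrite mulrA.
Qed.

Lemma Jn_Vn mu pi k : Jn mu pi k = \sum_(s : S) mu s * Vn pi k s.
Proof.
elim: k mu => [|k IH] mu.
  by rewrite /Jn big_geq // big1 // => s _; rewrite mulr0.
rewrite /Jn big_nat_recl // expr0 mul1r.
under eq_bigr do rewrite exprS state_probSr -mulrA.
rewrite -mulr_sumr -/(Jn _ _ _) IH next_dist_expect mulr_sumr -big_split /=.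
apply: eq_bigr => s _; rewrite mulrCA -mulrDr; congr (_ * _).
by rewrite mulr_sumr -big_split /=; apply: eq_bigr => a _; rewrite mulrCA -mulrDr.
Qed.

Hypothesis hP : is_kernel P.

Lemma state_prob_ge0 mu pi t s : is_policy pi -> (forall s, 0 <= mu s) ->
  0 <= state_prob mu P pi t s.
Proof.
move=> hpi mu_ge0; elim: t s => [//|t IH] s /=.
apply: sumr_ge0 => x _; apply: mulr_ge0 => //.
by apply: sumr_ge0 => a _; apply: mulr_ge0; [exact: (hpi x).1 | exact: (hP x a).1].
Qed.

Lemma sum_state_prob mu pi t : is_policy pi ->
  \sum_(s : S) state_prob mu P pi t s = \sum_(s : S) mu s.
Proof.
move=> hpi; elim: t => [//|t IH]; rewrite -IH.
have P_mass1 s a : \sum_(s' : S) P s a s' * 1 = 1.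
  by under eq_bigr do rewrite mulr1; exact: (hP s a).2.
transitivity (\sum_(s' : S) next_dist pi (state_prob mu P pi t) s' * 1).
  by under [RHS]eq_bigr do rewrite mulr1.
rewrite next_dist_expect; apply: eq_bigr => s _.
by under eq_bigr do rewrite P_mass1 mulr1; rewrite (hpi s).2 mulr1.
Qed.

Lemma state_prob_dist mu pi t : is_policy pi -> is_dist mu ->
  is_dist (state_prob mu P pi t).
Proof.
move=> hpi [mu_ge0 mu_sum1]; split; first by move=> s; exact: state_prob_ge0.
by rewrite sum_state_prob.
Qed.

Hypotheses (gamma_ge0 : 0 <= gamma) (gamma_lt1 : gamma < 1).

Definition Vmax : R := Rmax Rw / (1 - gamma).

Lemma Vmax_ge0 : 0 <= Vmax.
Proof. by rewrite divr_ge0 ?Rmax_ge0 // subr_ge0 ltW. Qed.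

Lemma Vmax_fixpoint : Rmax Rw + gamma * Vmax = Vmax.
Proof. by rewrite /Vmax; field; exact: discount_gap_neq0. Qed.

Lemma normr_Q_le (W : S -> R) s a : (forall s', `|W s'| <= Vmax) ->
  `|Rw s a + gamma * \sum_(s' : S) P s a s' * W s'| <= Vmax.
Proof.
move=> W_le; rewrite -Vmax_fixpoint; apply: le_trans (ler_normD _ _) _.
apply: lerD; first exact: normr_le_Rmax.
rewrite normrM ger0_norm // ler_wpM2l //.
exact: normr_expect_le.
Qed.

Lemma normr_Vn_le pi k s : is_policy pi -> `|Vn pi k s| <= Vmax.
Proof.
move=> hpi; elim: k s => [|k IH] s /=; first by rewrite normr0 Vmax_ge0.
by apply: normr_expect_le => // a; exact: normr_Q_le.
Qed.

Lemma one_step_deviation_le pi1 pi2 nu k :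
  is_policy pi2 -> (forall s, 0 <= nu s) ->
  \sum_(s : S) nu s * \sum_(a : A) pi1 s a * Rw s a
  + gamma * \sum_(s' : S) next_dist pi1 nu s' * Vn pi2 k s'
  - \sum_(s : S) nu s * Vn pi2 k.+1 s
  <= Vmax * \sum_(s : S) nu s * l1 (fun a => pi1 s a - pi2 s a).
Proof.
move=> hpi2 nu_ge0.
rewrite next_dist_expect !mulr_sumr -big_split -sumrB /=.
apply: ler_sum => s _.
set Q := fun a => Rw s a + gamma * \sum_(s' : S) P s a s' * Vn pi2 k s'.
have gapE : \sum_(a : A) (pi1 s a - pi2 s a) * Q a =
    \sum_(a : A) pi1 s a * Rw s a
    + gamma * \sum_(a : A) pi1 s a * \sum_(s' : S) P s a s' * Vn pi2 k s'
    - \sum_(a : A) pi2 s a * Q a.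
  under eq_bigr do rewrite mulrBl; rewrite sumrB; congr (_ - _).
  under eq_bigr do rewrite mulrDr; rewrite big_split mulr_sumr; congr (_ + _).
  by apply: eq_bigr => a _; rewrite mulrCA.
rewrite mulrCA -mulrDr -mulrBr -gapE mulrCA ler_wpM2l // mulr_sumr.
apply: le_trans (ler_norm _) _; apply: le_trans (ler_norm_sum _ _ _) _.
apply: ler_sum => a _; rewrite normrM mulrC ler_wpM2r //.
by apply: normr_Q_le => s'; exact: normr_Vn_le.
Qed.

Lemma Jn_Vn_deviation_le mu pi1 pi2 :
  is_policy pi1 -> is_policy pi2 -> (forall s, 0 <= mu s) -> forall t k,
  Jn mu pi1 t + gamma ^+ t * \sum_(s : S) state_prob mu P pi1 t s * Vn pi2 k s
  - \sum_(s : S) mu s * Vn pi2 (t + k) s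
  <= Vmax * \sum_(0 <= u < t) (gamma ^+ u *
       \sum_(s : S) state_prob mu P pi1 u s * l1 (fun a => pi1 s a - pi2 s a)).
Proof.
move=> hpi1 hpi2 mu_ge0; elim=> [|t IH] k.
  by rewrite /Jn !big_geq // expr0 mul1r add0r subrr mulr0.
have IHk := IH k.+1; rewrite addnS in IHk.
have := one_step_deviation_le pi1 k hpi2 (fun s => state_prob_ge0 t s hpi1 mu_ge0).
move=> /(ler_wpM2l (exprn_ge0 t gamma_ge0)); rewrite /next_dist => step_le.
move: IHk; rewrite /Jn !big_nat_recr //= exprS; lra.
Qed.

Lemma Jn_sub_le mu pi1 pi2 n :
  is_policy pi1 -> is_policy pi2 -> (forall s, 0 <= mu s) ->
  Jn mu pi1 n - Jn mu pi2 n
  <= Vmax * \sum_(s : S) visit_n mu pi1 s n * l1 (fun a => pi1 s a - pi2 s a).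
Proof.
move=> hpi1 hpi2 mu_ge0.
have := Jn_Vn_deviation_le hpi1 hpi2 mu_ge0 n 0.
have Vn0 : \sum_(s : S) state_prob mu P pi1 n s * Vn pi2 0 s = 0.
  by rewrite big1 // => s _; rewrite mulr0.
rewrite Vn0 mulr0 addr0 addn0 -Jn_Vn => /le_trans; apply; rewrite ler_wpM2l ?Vmax_ge0 //.
rewrite /visit_n; under eq_bigr do rewrite mulr_sumr.
rewrite exchange_big /=; apply: ler_sum => s _.
by rewrite mulr_suml; apply: ler_sum => t _; rewrite mulrA.
Qed.

Lemma cvgn_Jn mu pi : is_dist mu -> is_policy pi -> cvgn (Jn mu pi).
Proof.
move=> hmu hpi; apply: (cvgn_discounted_sum gamma_ge0 gamma_lt1 (c := Rmax Rw)) => t.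
apply: normr_expect_le; first exact: state_prob_dist.
by move=> s; apply: normr_expect_le => //; exact: normr_le_Rmax.
Qed.

Lemma limn_visit_n mu pi s : is_dist mu -> is_policy pi ->
  visit_n mu pi s @ \oo --> visit mu P gamma pi s / (1 - gamma).
Proof.
move=> hmu hpi; rewrite /visit [(1 - gamma) * _]mulrC mulfK ?discount_gap_neq0 //.
apply: (cvgn_discounted_sum gamma_ge0 gamma_lt1 (c := 1)) => t.
have [p_ge0 p_sum1] := state_prob_dist t hpi hmu.
rewrite ger0_norm // -p_sum1 (bigD1 s) //= lerDl; exact: sumr_ge0.
Qed.

Lemma J_sub_le mu pi1 pi2 : is_dist mu -> is_policy pi1 -> is_policy pi2 ->
  J mu P Rw gamma pi1 - J mu P Rw gamma pi2
  <= Vmax / (1 - gamma) *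
     Eover (visit mu P gamma pi1) (fun s => l1 (fun a => pi1 s a - pi2 s a)).
Proof.
move=> hmu hpi1 hpi2; set f := fun s => l1 _.
have bound_cvg : (fun n => Vmax * \sum_(s : S) visit_n mu pi1 s n * f s) @ \oo -->
    Vmax * \sum_(s : S) visit mu P gamma pi1 s / (1 - gamma) * f s.
  apply: cvgMl_tmp; apply: cvg_big => [|s _]; first exact: add_continuous.
  by apply: cvgMr_tmp; exact: limn_visit_n.
have -> : Vmax / (1 - gamma) * Eover (visit mu P gamma pi1) f =
    Vmax * \sum_(s : S) visit mu P gamma pi1 s / (1 - gamma) * f s.
  rewrite /Eover -mulrA mulr_sumr; congr (_ * _).
  by apply: eq_bigr => s _; rewrite mulrA [_^-1 * _]mulrC.
rewrite /J -/(Jn mu pi1) -/(Jn mu pi2) -limB; try exact: cvgn_Jn.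
rewrite -(cvg_lim _ bound_cvg) //; apply: ler_lim.
- by apply: is_cvgB; exact: cvgn_Jn.
- exact: cvgP bound_cvg.
- by apply: nearW => n; exact: Jn_sub_le hmu.1.
Qed.

End MDP.

Theorem theoremA4 (R : realType) (S A : finType)
  (mu : S -> R) (P : S -> A -> S -> R) (Rw : S -> A -> R) (gamma : R)
  (pih piav pistar : S -> A -> R) (Tsw : S -> bool) :
  0 < gamma < 1 ->
  is_dist mu -> is_kernel P ->
  is_policy pih -> is_policy piav ->
  let pimix := mix_policy Tsw pih piav in
  let dmix := visit mu P gamma pimix in
  let D := Eover dmix (fun s => l1 (fun a => pih s a - piav s a)) in
  0 < D ->
  let beta := Eover dmix (fun s => l1 (fun a => (Tsw s)%:R * (pih s a - piav s a))) / D in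
  is_policy pistar ->
  (forall pi, is_policy pi -> J mu P Rw gamma pi <= J mu P Rw gamma pistar) ->
  `|J mu P Rw gamma pistar - J mu P Rw gamma piav|
    <= beta * Rmax Rw / (1 - gamma) ^+ 2 * D
       + `|J mu P Rw gamma pistar - J mu P Rw gamma pimix|.
Proof.
move=> /andP[gamma_gt0 gamma_lt1] hmu hP hpih hpiav pimix dmix D D_gt0 beta _ opt.
have hmix : is_policy pimix by exact: is_policy_mix.
have := J_sub_le Rw hP (ltW gamma_gt0) gamma_lt1 hmu hmix hpiav.
have -> : (fun s => l1 (fun a => pimix s a - piav s a)) =
    (fun s => l1 (fun a => (Tsw s)%:R * (pih s a - piav s a))).
  by apply/funext => s; congr l1; apply/funext => a; exact: mix_policy_subr.
have -> : Vmax Rw gamma / (1 - gamma) *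
    Eover dmix (fun s => l1 (fun a => (Tsw s)%:R * (pih s a - piav s a)))
    = beta * Rmax Rw / (1 - gamma) ^+ 2 * D.
  by rewrite /beta /Vmax; field; rewrite discount_gap_neq0 // gt_eqF.
move=> mix_gap_le.
have Jstar_ge := opt _ hpiav.
have := ler_norm (J mu P Rw gamma pistar - J mu P Rw gamma pimix).
rewrite [`|J mu P Rw gamma pistar - _ piav|]ger0_norm ?subr_ge0 //; lra.
Qed.
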